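(* Let $0<L<\infty$, $\varphi\in(0,1)$, and $\kappa_f,\kappa_s,h_v,c_{p,f},\dot m_c,A_c,R,\mu_f,K_D,K_F,p_{HG}>0$, $T_b>0$, $q_{HG}>0$. Let $(T_f,T_s)$ be the unique solution on $[0,L]$ of $$-\varphi\kappa_fT_f''+c_{p,f}\frac{\dot m_c}{A_c}T_f'=h_v(T_s-T_f),\qquad (1-\varphi)\kappa_sT_s''=h_v(T_s-T_f)\quad\text{on }(0,L),$$ $$T_f(0)=T_s(0)=T_b,\quad (1-\varphi)\kappa_sT_s'(L)=q_{HG}-c_{p,f}\frac{\dot m_c}{A_c}(T_s(L)-T_f(L)),\quad T_f'(L)=\frac{h_vA_c}{c_{p,f}\dot m_c}(T_s(L)-T_f(L)),$$ and assume $\frac{p_{HG}}{R\,T_f(L)}>\frac{\dot m_c}{\varphi A_c}\frac{1}{\sqrt{R\,T_b}}$. Let $\rho_f$ be the unique solution on $[0,L]$ of $\rho_f'(y)=\overline N(y,\rho_f(y))\rho_f(y)$, $\rho_f(L)=\frac{p_{HG}}{R\,T_f(L)}$, where $$\overline N(y,\rho)=\frac{R\,(c_{p,f}\dot m_c)^{-1}h_vA_c\,\rho^2\,(T_s(y)-T_f(y))+\frac{\dot m_c}{A_c}\Big(\frac{\mu_f}{K_D}+\frac{\dot m_c}{K_FA_c}\Big)}{\varphi^{-2}\big(\frac{\dot m_c}{A_c}\big)^2-R\,T_f(y)\,\rho^2},$$ and define the velocity $v(y)=\frac{\dot m_c}{A_c\,\rho_f(y)}$, $y\in[0,L]$. Then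 $v$ is positive and strictly monotonically increasing on $[0,L]$.
   Context: $v$ is the Darcy velocity of the coolant, determined from the constant mass flux $\rho_f v=\dot m_c/A_c$. *)

From Stdlib Require Import Reals.
Open Scope R_scope.

(* One-sided-at-the-endpoints derivative: f' x is the derivative of f at x
   within the closed interval [a,b] (limit of difference quotients taken
   over y in [a,b], y <> x). *)
Definition deriv_within (a b : R) (f : R -> R) (x l : R) : Prop :=
  a <= x <= b /\
  limit1_in (fun y => (f y - f x) / (y - x))
            (fun y => a <= y <= b /\ y <> x) l x.

Definition temp_solution (L phi kf ks hv cpf mc Ac Tb qHG : R)
  (Tf Ts : R -> R) : Prop :=
  exists dTf dTs d2Tf d2Ts : R -> R,
    (forall y, 0 <= y <= L -> deriv_within 0 L Tf y (dTf y)) /\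
    (forall y, 0 <= y <= L -> deriv_within 0 L Ts y (dTs y)) /\
    (forall y, 0 < y < L -> derivable_pt_lim dTf y (d2Tf y)) /\
    (forall y, 0 < y < L -> derivable_pt_lim dTs y (d2Ts y)) /\
    (forall y, 0 < y < L ->
       - phi * kf * d2Tf y + cpf * (mc / Ac) * dTf y = hv * (Ts y - Tf y)) /\
    (forall y, 0 < y < L ->
       (1 - phi) * ks * d2Ts y = hv * (Ts y - Tf y)) /\
    Tf 0 = Tb /\ Ts 0 = Tb /\
    (1 - phi) * ks * dTs L = qHG - cpf * (mc / Ac) * (Ts L - Tf L) /\
    dTf L = hv * Ac / (cpf * mc) * (Ts L - Tf L).

Definition Nbar (phi hv cpf mc Ac Rg muf KD KF : R) (Tf Ts : R -> R)
  (y rho : R) : R :=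
  (Rg * / (cpf * mc) * hv * Ac * rho ^ 2 * (Ts y - Tf y)
     + mc / Ac * (muf / KD + mc / (KF * Ac)))
  / (/ phi ^ 2 * (mc / Ac) ^ 2 - Rg * Tf y * rho ^ 2).

Definition Nbar_den (phi mc Ac Rg : R) (Tf : R -> R) (y rho : R) : R :=
  / phi ^ 2 * (mc / Ac) ^ 2 - Rg * Tf y * rho ^ 2.

(* Solution on [0,L] of rho' = Nbar(y,rho) rho, rho(L) = pHG/(Rg Tf(L));
   N-bar must be well defined along the solution (nonzero denominator). *)
Definition density_solution (L phi hv cpf mc Ac Rg muf KD KF pHG : R)
  (Tf Ts : R -> R) (rho : R -> R) : Prop :=
  (forall y, 0 <= y <= L -> Nbar_den phi mc Ac Rg Tf y (rho y) <> 0) /\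
  (forall y, 0 <= y <= L ->
     deriv_within 0 L rho y
       (Nbar phi hv cpf mc Ac Rg muf KD KF Tf Ts y (rho y) * rho y)) /\
  rho L = pHG / (Rg * Tf L).

From Stdlib Require Import Reals Lra FunctionalExtensionality.
From Coquelicot Require Import Coquelicot.
Open Scope R_scope.

(* The temperature gap w = Ts - Tf is nonnegative.  At a negative minimum of w,
   the outlet conditions give w'(L) > 0.  At an interior minimum y0 the solid
   equation gives Ts''(y0) < 0, while a Gronwall argument on the fluid equation
   gives c Tf' >= h min w on (0, L), hence Tf''(y0) >= 0, contradicting
   w''(y0) >= 0.  With min w >= 0 the same bound makes Tf nondecreasing, so
   Tf(L) >= Tb and the inflow condition makes the denominator of N-bar negative
   at y = L.  As the denominator never vanishes it is negative on [0, L]; this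
   forces rho <> 0, hence rho > 0.  Since w >= 0 the numerator of N-bar is
   positive, so rho' = N-bar rho < 0 and v = mc / (Ac rho) increases. *)

(* Functions known only on [a, b] are extended by constants outside it, so
   that the global notions of the standard library (continuity, MVT, IVT)
   apply to them. *)
Definition clamp (a b x : R) : R := Rmax a (Rmin b x).

Lemma clamp_in a b x : a <= b -> a <= clamp a b x <= b.
Proof. intros. unfold clamp, Rmin, Rmax; repeat destruct Rle_dec; lra. Qed.

Lemma clamp_id a b x : a <= x <= b -> clamp a b x = x.
Proof. intros. unfold clamp, Rmin, Rmax; repeat destruct Rle_dec; lra. Qed.

Lemma clamp_dist a b x y : Rabs (clamp a b x - clamp a b y) <= Rabs (x - y).
Proof.
  unfold clamp, Rmin, Rmax; repeat destruct Rle_dec;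
    unfold Rabs; repeat destruct Rcase_abs; lra.
Qed.

Definition continuous_on (a b : R) (f : R -> R) : Prop :=
  forall x, a <= x <= b -> limit1_in f (fun y => a <= y <= b) (f x) x.

Lemma continuity_clamp a b f : a <= b -> continuous_on a b f ->
  continuity (fun y => f (clamp a b y)).
Proof.
  intros Hab Hf x eps Heps.
  destruct (Hf _ (clamp_in a b x Hab) eps Heps) as [del [Hdel Hy]].
  exists del; split; [exact Hdel|].
  intros y [_ Hyx]; apply Hy; split; [now apply clamp_in|].
  eapply Rle_lt_trans; [apply clamp_dist | exact Hyx].
Qed.

Lemma derivable_pt_lim_clamp a b f x l : a < x < b -> derivable_pt_lim f x l ->
  derivable_pt_lim (fun y => f (clamp a b y)) x l.
Proof.
  intros Hx Hd; apply is_derive_Reals; apply (is_derive_ext_loc f).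
  - apply (filter_imp (fun y => a < y /\ y < b)).
    + intros y Hy; rewrite clamp_id; [reflexivity | lra].
    + apply filter_and; [apply (open_gt a) | apply (open_lt b)]; lra.
  - now apply is_derive_Reals.
Qed.

Lemma continuous_nonvanishing_same_sign a b f : a <= b -> continuous_on a b f ->
  (forall x, a <= x <= b -> f x <> 0) -> forall x, a <= x <= b -> 0 < f x * f b.
Proof.
  intros Hab Hf Hnz x Hx.
  destruct (Rlt_le_dec 0 (f x * f b)) as [|Hle]; [assumption|exfalso].
  destruct (IVT_cor (fun y => f (clamp a b y)) x b (continuity_clamp a b f Hab Hf) (proj2 Hx))
    as [z [Hz Hfz]].
  { rewrite !clamp_id; lra. }
  rewrite clamp_id in Hfz by lra.
  apply (Hnz z); [lra | exact Hfz].
Qed.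

Section DerivWithin.

Variables (a b : R) (f : R -> R).

Lemma deriv_within_continuous_on f' :
  (forall x, a <= x <= b -> deriv_within a b f x (f' x)) -> continuous_on a b f.
Proof.
  intros Hf x Hx eps Heps.
  destruct (Hf x Hx) as [_ Hl].
  destruct (Hl 1 Rlt_0_1) as [alp [Halp Hq]].
  set (K := Rabs (f' x) + 1).
  assert (HK : 0 < K) by (pose proof (Rabs_pos (f' x)); unfold K; lra).
  exists (Rmin alp (eps / K)); split.
  { apply Rmin_glb_lt; [exact Halp | now apply Rdiv_lt_0_compat]. }
  intros y [Hy Hyx]; simpl in *; unfold R_dist in *.
  destruct (Req_dec y x) as [->|Hne]; [now rewrite Rminus_diag, Rabs_R0|].
  assert (Hq1 := Hq y (conj (conj Hy Hne) (Rlt_le_trans _ _ _ Hyx (Rmin_l _ _)))).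
  simpl in Hq1; unfold R_dist in Hq1.
  assert (Hquot : Rabs ((f y - f x) / (y - x)) <= K).
  { pose proof (Rabs_triang_inv ((f y - f x) / (y - x)) (f' x)); unfold K; lra. }
  assert (Hsmall : Rabs (y - x) < eps / K) by exact (Rlt_le_trans _ _ _ Hyx (Rmin_r _ _)).
  replace (f y - f x) with ((f y - f x) / (y - x) * (y - x)) by (field; lra).
  rewrite Rabs_mult.
  apply Rle_lt_trans with (K * Rabs (y - x)).
  { apply Rmult_le_compat_r; [apply Rabs_pos | exact Hquot]. }
  replace eps with (K * (eps / K)) by (field; lra).
  now apply Rmult_lt_compat_l.
Qed.

Lemma deriv_within_interior x l : deriv_within a b f x l -> a < x < b ->
  derivable_pt_lim f x l.
Proof.
  intros [_ Hl] Hx eps Heps.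
  destruct (Hl eps Heps) as [alp [Halp Hq]].
  assert (Hdel : 0 < Rmin alp (Rmin (x - a) (b - x))) by (repeat apply Rmin_glb_lt; lra).
  exists (mkposreal _ Hdel); intros h Hh0 Hh; simpl in Hh.
  pose proof (Rmin_l alp (Rmin (x - a) (b - x))); pose proof (Rmin_r alp (Rmin (x - a) (b - x))).
  pose proof (Rmin_l (x - a) (b - x)); pose proof (Rmin_r (x - a) (b - x)).
  assert (Hxh : a <= x + h <= b) by (unfold Rabs in Hh; destruct Rcase_abs; lra).
  assert (Hq1 := Hq (x + h)); simpl in Hq1; unfold R_dist in Hq1.
  replace (x + h - x) with h in Hq1 by ring.
  apply Hq1; repeat split; try lra.
Qed.

Lemma deriv_within_minus g x l l' : deriv_within a b f x l -> deriv_within a b g x l' ->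
  deriv_within a b (fun y => f y - g y) x (l - l').
Proof.
  intros [Hx Hl] [_ Hl']; split; [exact Hx|].
  replace (fun y => (f y - g y - (f x - g x)) / (y - x)) with
    (fun y => (f y - f x) / (y - x) - (g y - g x) / (y - x)).
  - now apply limit_minus.
  - apply functional_extensionality; intro y; unfold Rdiv; ring.
Qed.

Lemma deriv_within_right_end_le x0 l B : a <= x0 < b -> deriv_within a b f b l ->
  (forall y, x0 < y < b -> (f y - f b) / (y - b) <= B) -> l <= B.
Proof.
  intros Hx0 [_ Hl] HB.
  destruct (Rle_lt_dec l B) as [|Hlt]; [assumption|exfalso].
  destruct (Hl (l - B) ltac:(lra)) as [alp [Halp Hq]].
  set (y := Rmax ((x0 + b) / 2) (b - alp / 2)).
  assert (Hy : x0 < y < b /\ b - y < alp) by (unfold y, Rmax; destruct Rle_dec; lra).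
  assert (Hq1 := Hq y); simpl in Hq1; unfold R_dist in Hq1.
  assert (Hclose : Rabs ((f y - f b) / (y - b) - l) < l - B).
  { apply Hq1; repeat split; try lra. rewrite Rabs_minus_sym, Rabs_right; lra. }
  assert (Hy' := HB y (proj1 Hy)).
  unfold Rabs in Hclose; destruct Rcase_abs; lra.
Qed.

End DerivWithin.


Section OnInterval.

Variables (a b : R) (f f' : R -> R).
Hypothesis Hab : a <= b.
Hypothesis Hf : forall x, a <= x <= b -> deriv_within a b f x (f' x).

Lemma deriv_within_continuity : continuity (fun y => f (clamp a b y)).
Proof. exact (continuity_clamp a b f Hab (deriv_within_continuous_on a b f f' Hf)). Qed.

Lemma deriv_within_MVT x z : a <= x -> x < z -> z <= b ->
  exists c, x < c < z /\ f z - f x = f' c * (z - x).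
Proof.
  intros Hax Hxz Hzb.
  set (F := fun y => f (clamp a b y)).
  assert (HF : forall c, x < c < z -> derivable_pt_lim F c (f' c)).
  { intros c Hc; apply derivable_pt_lim_clamp; [lra|].
    apply (deriv_within_interior a b); [apply Hf | ]; lra. }
  assert (pr1 : forall c, x < c < z -> derivable_pt F c)
    by (intros c Hc; exact (exist _ (f' c) (HF c Hc))).
  assert (pr2 : forall c, x < c < z -> derivable_pt id c) by (intros c _; apply derivable_pt_id).
  destruct (MVT F id x z pr1 pr2 Hxz (fun c _ => deriv_within_continuity c)
              (fun c _ => derivable_continuous_pt _ _ (derivable_pt_id c))) as [c [Hc HMVT]].
  rewrite (derive_pt_eq_0 F c (f' c) (pr1 c Hc) (HF c Hc)),
          (derive_pt_eq_0 id c 1 (pr2 c Hc) (derivable_pt_lim_id c)) in HMVT.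
  exists c; split; [exact Hc|].
  unfold F, id in HMVT; rewrite !clamp_id in HMVT by lra; lra.
Qed.

Lemma deriv_within_right_end_min : a < b -> (forall y, a <= y <= b -> f b <= f y) -> f' b <= 0.
Proof.
  intros Hlt Hmin.
  apply (deriv_within_right_end_le a b f a); [lra | apply Hf; lra |].
  intros y Hy; unfold Rdiv.
  assert (f b <= f y) by (apply Hmin; lra).
  assert (/ (y - b) < 0) by (apply Rinv_lt_0_compat; lra).
  nra.
Qed.

Lemma deriv_within_right_end_bound x0 B : a <= x0 < b ->
  (forall y, x0 < y < b -> f' y <= B) -> f' b <= B.
Proof.
  intros Hx0 HB.
  apply (deriv_within_right_end_le a b f x0); [exact Hx0 | apply Hf; lra |].
  intros y Hy.
  destruct (deriv_within_MVT y b ltac:(lra) ltac:(lra) ltac:(lra)) as [c [Hc HMVT]].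
  replace (f y - f b) with (f' c * (y - b)) by lra.
  replace (f' c * (y - b) / (y - b)) with (f' c) by (field; lra).
  apply HB; lra.
Qed.

Lemma deriv_within_neg_decreasing : (forall x, a <= x <= b -> f' x < 0) ->
  forall x z, a <= x -> x < z -> z <= b -> f z < f x.
Proof.
  intros Hneg x z Hax Hxz Hzb.
  destruct (deriv_within_MVT x z Hax Hxz Hzb) as [c [Hc HMVT]].
  assert (f' c < 0) by (apply Hneg; lra).
  nra.
Qed.

End OnInterval.



Lemma interior_min_second_deriv_nonneg a b f f' x0 d : a < x0 < b ->
  (forall y, a < y < b -> derivable_pt_lim f y (f' y)) -> derivable_pt_lim f' x0 d ->
  (forall y, a < y < b -> f x0 <= f y) -> 0 <= d.
Proof.
  intros Hx0 Hf Hf' Hmin.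
  destruct (Rle_lt_dec 0 d) as [|Hd]; [assumption|exfalso].
  assert (Hcrit : f' x0 = 0).
  { pose (pr := exist _ (f' x0) (Hf x0 Hx0) : derivable_pt f x0).
    rewrite <- (derive_pt_eq_0 f x0 (f' x0) pr (Hf x0 Hx0)).
    apply (deriv_minimum f a b x0 pr); try lra.
    intros y H1 H2; apply Hmin; lra. }
  destruct (Hf' (- d / 2) ltac:(lra)) as [del Hdel].
  set (e := Rmin del (b - x0) / 2).
  assert (He : 0 < e < del /\ e < b - x0).
  { destruct del as [dl Hdl]; simpl in *; unfold e, Rmin; destruct Rle_dec; lra. }
  destruct (MVT_cor2 f f' x0 (x0 + e) ltac:(lra)) as [c [HMVT Hc]].
  { intros c Hc; apply Hf; lra. }
  assert (Hq := Hdel (c - x0) ltac:(lra) ltac:(rewrite Rabs_right; lra)).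
  replace (x0 + (c - x0)) with c in Hq by ring; rewrite Hcrit in Hq.
  assert (Hslope : f' c / (c - x0) < 0) by (unfold Rabs in Hq; destruct Rcase_abs; lra).
  assert (Hneg : f' c < 0).
  { replace (f' c) with (f' c / (c - x0) * (c - x0)) by (field; lra). nra. }
  assert (f x0 <= f (x0 + e)) by (apply Hmin; lra).
  nra.
Qed.

Lemma gronwall_nonpos r r' k x0 b : 0 <= k ->
  (forall t, x0 <= t < b -> derivable_pt_lim r t (r' t)) ->
  (forall t, x0 < t < b -> r' t <= k * r t) -> r x0 <= 0 ->
  forall x, x0 <= x < b -> r x <= r x0.
Proof.
  intros Hk Hr Hr' Hr0 x Hx.
  destruct (Req_dec x x0) as [->|Hne]; [lra|].
  set (g := fun t => exp (- (k * t)) * r t).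
  assert (Hg : forall t, x0 <= t <= x ->
            derivable_pt_lim g t (exp (- (k * t)) * (r' t - k * r t))).
  { intros t Ht; unfold g.
    replace (exp (- (k * t)) * (r' t - k * r t))
      with (- k * exp (- (k * t)) * r t + exp (- (k * t)) * r' t) by ring.
    apply (derivable_pt_lim_mult (fun t => exp (- (k * t))) r t); [|apply Hr; lra].
    apply is_derive_Reals; auto_derive; [exact I | ring]. }
  destruct (MVT_cor2 g _ x0 x ltac:(lra) Hg) as [c [HMVT Hc]].
  assert (Hgc : exp (- (k * c)) * (r' c - k * r c) <= 0).
  { assert (r' c <= k * r c) by (apply Hr'; lra).
    pose proof (exp_pos (- (k * c))); nra. }
  assert (Hgx : exp (- (k * x)) * r x <= exp (- (k * x0)) * r x0) by (unfold g in HMVT; nra).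
  assert (Hgrowth : 1 <= exp (k * (x - x0))).
  { pose proof (exp_ineq1_le (k * (x - x0))); nra. }
  assert (Hsplit : exp (- (k * x0)) = exp (- (k * x)) * exp (k * (x - x0))).
  { rewrite <- exp_plus; f_equal; ring. }
  pose proof (exp_pos (- (k * x))).
  assert (r x <= exp (k * (x - x0)) * r x0).
  { apply Rmult_le_reg_l with (exp (- (k * x))); [assumption|].
    rewrite <- Rmult_assoc, <- Hsplit; exact Hgx. }
  nra.
Qed.

Section Temperatures.

(* [a], [b], [c] stand for (1 - phi) ks, phi kf and cpf mc / Ac. *)
Variables (L a b c h q : R) (Tf Ts dTf dTs d2Tf d2Ts : R -> R).
Hypotheses (HL : 0 < L) (Ha : 0 < a) (Hb : 0 < b) (Hc : 0 < c) (Hh : 0 < h) (Hq : 0 < q).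
Hypothesis HdTf : forall y, 0 <= y <= L -> deriv_within 0 L Tf y (dTf y).
Hypothesis HdTs : forall y, 0 <= y <= L -> deriv_within 0 L Ts y (dTs y).
Hypothesis Hd2Tf : forall y, 0 < y < L -> derivable_pt_lim dTf y (d2Tf y).
Hypothesis Hd2Ts : forall y, 0 < y < L -> derivable_pt_lim dTs y (d2Ts y).
Hypothesis Hfluid : forall y, 0 < y < L -> b * d2Tf y = c * dTf y - h * (Ts y - Tf y).
Hypothesis Hsolid : forall y, 0 < y < L -> a * d2Ts y = h * (Ts y - Tf y).
Hypothesis Hinlet : Ts 0 = Tf 0.
Hypothesis Hsolid_outlet : a * dTs L = q - c * (Ts L - Tf L).
Hypothesis Hfluid_outlet : c * dTf L = h * (Ts L - Tf L).

Lemma fluid_flux_lower_bound m : (forall y, 0 <= y <= L -> m <= Ts y - Tf y) ->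
  forall y0, 0 < y0 < L -> h * m <= c * dTf y0.
Proof.
  intros Hm y0 Hy0.
  destruct (Rle_lt_dec (h * m) (c * dTf y0)) as [|Hlt]; [assumption|exfalso].
  set (r := fun y => c * dTf y - h * m).
  (* [r' = (c/b) (r + h m - h (Ts - Tf)) <= (c/b) r], so [r] stays below [r y0 < 0]. *)
  assert (Hr : forall y, y0 <= y < L -> r y <= r y0).
  { apply (gronwall_nonpos r (fun y => c * d2Tf y) (c / b)).
    - apply Rlt_le, Rdiv_lt_0_compat; assumption.
    - intros t Ht; unfold r.
      replace (c * d2Tf t) with (c * d2Tf t - 0) by ring.
      apply (derivable_pt_lim_minus (fun t => c * dTf t) (fun _ => h * m)).
      + apply derivable_pt_lim_scal, Hd2Tf; lra.
      + apply derivable_pt_lim_const.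
    - intros t Ht; unfold r.
      assert (Hmt := Hm t ltac:(lra)).
      replace (c * d2Tf t) with (c / b * (b * d2Tf t)) by (field; lra).
      rewrite Hfluid by lra.
      apply Rmult_le_compat_l; [apply Rlt_le, Rdiv_lt_0_compat; assumption | nra].
    - unfold r; lra. }
  assert (HdTfL : dTf L <= dTf y0).
  { apply (deriv_within_right_end_bound 0 L Tf dTf (Rlt_le _ _ HL) HdTf y0); [lra|].
    intros y Hy; assert (Hry := Hr y ltac:(lra)); unfold r in Hry; nra. }
  assert (HmL := Hm L ltac:(lra)).
  nra.
Qed.

Lemma temp_difference_nonneg y : 0 <= y <= L -> 0 <= Ts y - Tf y.
Proof.
  set (w := fun y => Ts y - Tf y).
  assert (Hw : forall y, 0 <= y <= L -> deriv_within 0 L w y (dTs y - dTf y)).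
  { intros z Hz; apply deriv_within_minus; auto. }
  destruct (continuity_ab_min (fun y => w (clamp 0 L y)) 0 L (Rlt_le _ _ HL)
              (fun y _ => deriv_within_continuity 0 L w _ (Rlt_le _ _ HL) Hw y))
    as [y0 [Hmin Hy0]].
  rewrite clamp_id in Hmin by exact Hy0.
  assert (Hmin' : forall y, 0 <= y <= L -> w y0 <= w y).
  { intros z Hz; specialize (Hmin z Hz); rewrite clamp_id in Hmin; assumption. }
  intros Hy; change (0 <= w y).
  destruct (Rle_lt_dec 0 (w y0)) as [H0|Hneg]; [specialize (Hmin' y Hy); lra|exfalso].
  assert (Hy0ne : y0 <> 0) by (intros ->; unfold w in Hneg; lra).
  destruct (Req_dec y0 L) as [->|HyL].
  - assert (dTs L - dTf L <= 0).
    { apply (deriv_within_right_end_min 0 L w _ (Rlt_le _ _ HL) Hw HL); exact Hmin'. }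
    assert (HwL : Ts L - Tf L < 0) by exact Hneg.
    assert (0 < a * dTs L) by nra.
    assert (c * dTf L < 0) by nra.
    assert (0 < dTs L) by nra.
    assert (dTf L < 0) by nra.
    lra.
  - assert (Hy0i : 0 < y0 < L) by lra.
    assert (Hflux := fluid_flux_lower_bound (w y0) Hmin' y0 Hy0i).
    assert (Hconvex : 0 <= d2Ts y0 - d2Tf y0).
    { apply (interior_min_second_deriv_nonneg 0 L w (fun y => dTs y - dTf y) y0 _ Hy0i).
      - intros z Hz; apply (deriv_within_interior 0 L); [apply Hw; lra | exact Hz].
      - apply derivable_pt_lim_minus; auto.
      - intros z Hz; apply Hmin'; lra. }
    assert (Hs := Hsolid y0 Hy0i); assert (Hf := Hfluid y0 Hy0i).
    assert (Hwy0 : Ts y0 - Tf y0 < 0) by exact Hneg.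
    assert (d2Ts y0 < 0) by (unfold w in Hs; nra).
    assert (0 <= d2Tf y0) by (unfold w in Hflux; nra).
    lra.
Qed.

Lemma fluid_temp_inlet_le_outlet : Tf 0 <= Tf L.
Proof.
  destruct (deriv_within_MVT 0 L Tf dTf (Rlt_le _ _ HL) HdTf 0 L ltac:(lra) HL ltac:(lra))
    as [y0 [Hy0 HMVT]].
  assert (h * 0 <= c * dTf y0).
  { apply (fluid_flux_lower_bound 0); [apply temp_difference_nonneg | exact Hy0]. }
  nra.
Qed.

End Temperatures.

Lemma temp_solution_heating L phi kf ks hv cpf mc Ac Tb qHG Tf Ts :
  0 < L -> 0 < phi < 1 -> 0 < kf -> 0 < ks -> 0 < hv -> 0 < cpf -> 0 < mc -> 0 < Ac ->
  0 < qHG -> temp_solution L phi kf ks hv cpf mc Ac Tb qHG Tf Ts ->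
  (forall y, 0 <= y <= L -> 0 <= Ts y - Tf y) /\ Tb <= Tf L.
Proof.
  intros HL Hphi Hkf Hks Hhv Hcpf Hmc HAc HqHG
    (dTf & dTs & d2Tf & d2Ts & HdTf & HdTs & Hd2Tf & Hd2Ts & Hfluid & Hsolid &
     HTf0 & HTs0 & Hsolid_outlet & Hfluid_outlet).
  assert (Hadv : 0 < cpf * (mc / Ac)) by (apply Rmult_lt_0_compat, Rdiv_lt_0_compat; assumption).
  assert (Hinlet : Ts 0 = Tf 0) by congruence.
  assert (Hfluid' : forall y, 0 < y < L ->
            phi * kf * d2Tf y = cpf * (mc / Ac) * dTf y - hv * (Ts y - Tf y)).
  { intros y Hy; rewrite <- (Hfluid y Hy); ring. }
  assert (Hfluid_outlet' : cpf * (mc / Ac) * dTf L = hv * (Ts L - Tf L)).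
  { rewrite Hfluid_outlet; field; lra. }
  split.
  - apply (temp_difference_nonneg L ((1 - phi) * ks) (phi * kf) (cpf * (mc / Ac)) hv qHG
             Tf Ts dTf dTs d2Tf d2Ts); auto; nra.
  - rewrite <- HTf0.
    apply (fluid_temp_inlet_le_outlet L ((1 - phi) * ks) (phi * kf) (cpf * (mc / Ac)) hv qHG
             Tf Ts dTf dTs d2Tf d2Ts); auto; nra.
Qed.
Lemma Nbar_den_continuous_on a b phi mc Ac Rg Tf rho :
  continuous_on a b Tf -> continuous_on a b rho ->
  continuous_on a b (fun y => Nbar_den phi mc Ac Rg Tf y (rho y)).
Proof.
  intros HTf Hrho x Hx; unfold Nbar_den.
  refine (limit_minus _ _ _ _ _ _ (limit_free (fun _ => / phi ^ 2 * (mc / Ac) ^ 2) _ x x) _).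
  refine (limit_mul _ _ _ _ _ _ (limit_mul _ _ _ _ _ _ (limit_free (fun _ => Rg) _ x x) (HTf x Hx)) _).
  exact (limit_mul _ _ _ _ _ _ (Hrho x Hx)
           (limit_mul _ _ _ _ _ _ (Hrho x Hx) (limit_free (fun _ => 1) _ x x))).
Qed.

Section Density.

Variables (L phi hv cpf mc Ac Rg muf KD KF pHG Tb : R) (Tf Ts rho : R -> R).
Hypotheses (HL : 0 < L) (Hphi : 0 < phi) (Hhv : 0 < hv) (Hcpf : 0 < cpf) (Hmc : 0 < mc)
  (HAc : 0 < Ac) (HRg : 0 < Rg) (Hmuf : 0 < muf) (HKD : 0 < KD) (HKF : 0 < KF) (HpHG : 0 < pHG)
  (HTb : 0 < Tb).
Hypothesis HTf : continuous_on 0 L Tf.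
Hypothesis Hheat : forall y, 0 <= y <= L -> 0 <= Ts y - Tf y.
Hypothesis HTfL : Tb <= Tf L.
Hypothesis Hin : pHG / (Rg * Tf L) > mc / (phi * Ac) * (1 / sqrt (Rg * Tb)).
Hypothesis Hrho : density_solution L phi hv cpf mc Ac Rg muf KD KF pHG Tf Ts rho.

Lemma Nbar_den_outlet_neg : Nbar_den phi mc Ac Rg Tf L (rho L) < 0.
Proof.
  destruct Hrho as (_ & _ & HrhoL).
  set (M := mc / (phi * Ac)).
  set (s := sqrt (Rg * Tb)).
  assert (HM : 0 < M) by (apply Rdiv_lt_0_compat; nra).
  assert (Hs : 0 < s) by (apply sqrt_lt_R0; nra).
  assert (Hs2 : s * s = Rg * Tb) by (apply sqrt_sqrt; nra).
  assert (Hsuper : M < rho L * s).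
  { rewrite HrhoL.
    replace M with (M * (1 / s) * s) by (field; lra).
    apply Rmult_lt_compat_r; [exact Hs | exact Hin]. }
  assert (HrhoL0 : 0 < rho L) by nra.
  assert (M * M < rho L ^ 2 * (Rg * Tb)) by (rewrite <- Hs2; nra).
  unfold Nbar_den.
  replace (/ phi ^ 2 * (mc / Ac) ^ 2) with (M * M) by (unfold M; field; lra).
  assert (rho L ^ 2 * (Rg * Tb) <= Rg * Tf L * rho L ^ 2).
  { assert (0 <= rho L ^ 2 * Rg) by (apply Rmult_le_pos; [apply pow2_ge_0 | lra]). nra. }
  lra.
Qed.

Lemma Nbar_den_neg y : 0 <= y <= L -> Nbar_den phi mc Ac Rg Tf y (rho y) < 0.
Proof.
  intros Hy.
  destruct Hrho as (Hden & Hdrho & _).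
  assert (Hsign := continuous_nonvanishing_same_sign 0 L _ (Rlt_le _ _ HL)
    (Nbar_den_continuous_on 0 L phi mc Ac Rg Tf rho HTf
       (deriv_within_continuous_on 0 L rho _ Hdrho)) Hden y Hy).
  assert (HdenL := Nbar_den_outlet_neg).
  nra.
Qed.

Lemma density_pos y : 0 <= y <= L -> 0 < rho y.
Proof.
  intros Hy.
  assert (Hrho_sol := Hrho); destruct Hrho_sol as (_ & Hdrho & HrhoL).
  assert (Hnz : forall x, 0 <= x <= L -> rho x <> 0).
  { intros x Hx Hzero; assert (Hd := Nbar_den_neg x Hx).
    unfold Nbar_den in Hd; rewrite Hzero in Hd.
    assert (0 < / phi ^ 2 * (mc / Ac) ^ 2).
    { apply Rmult_lt_0_compat; [apply Rinv_0_lt_compat, pow_lt | apply pow_lt, Rdiv_lt_0_compat]; lra. }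
    replace (Rg * Tf x * 0 ^ 2) with 0 in Hd by ring; lra. }
  assert (Hsign := continuous_nonvanishing_same_sign 0 L rho (Rlt_le _ _ HL)
                     (deriv_within_continuous_on 0 L rho _ Hdrho) Hnz y Hy).
  assert (0 < rho L) by (rewrite HrhoL; apply Rdiv_lt_0_compat; nra).
  nra.
Qed.

Lemma density_deriv_neg y : 0 <= y <= L ->
  Nbar phi hv cpf mc Ac Rg muf KD KF Tf Ts y (rho y) * rho y < 0.
Proof.
  intros Hy.
  assert (Hden := Nbar_den_neg y Hy); unfold Nbar_den in Hden.
  assert (Hr := density_pos y Hy).
  assert (Hnum : 0 < Rg * / (cpf * mc) * hv * Ac * rho y ^ 2 * (Ts y - Tf y)
                     + mc / Ac * (muf / KD + mc / (KF * Ac))).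
  { assert (0 <= Rg * / (cpf * mc) * hv * Ac * rho y ^ 2 * (Ts y - Tf y)).
    { assert (0 < / (cpf * mc)) by (apply Rinv_0_lt_compat; nra).
      pose proof (Hheat y Hy); pose proof (pow2_ge_0 (rho y)).
      repeat apply Rmult_le_pos; lra. }
    assert (0 < mc / Ac * (muf / KD + mc / (KF * Ac))).
    { apply Rmult_lt_0_compat; [apply Rdiv_lt_0_compat; lra|].
      apply Rplus_lt_0_compat; apply Rdiv_lt_0_compat; nra. }
    lra. }
  assert (Hinv := Rinv_lt_0_compat _ Hden).
  unfold Nbar, Rdiv at 1.
  set (num := Rg * / (cpf * mc) * hv * Ac * rho y ^ 2 * (Ts y - Tf y)
                + mc / Ac * (muf / KD + mc / (KF * Ac))) in *.
  set (inv := / (/ phi ^ 2 * (mc / Ac) ^ 2 - Rg * Tf y * rho y ^ 2)) in *.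
  assert (num * inv < 0) by nra.
  nra.
Qed.

Lemma density_decreasing y1 y2 : 0 <= y1 -> y1 < y2 -> y2 <= L -> rho y2 < rho y1.
Proof.
  destruct Hrho as (_ & Hdrho & _).
  exact (deriv_within_neg_decreasing 0 L rho _ (Rlt_le _ _ HL) Hdrho density_deriv_neg y1 y2).
Qed.

End Density.

Theorem proposition4
  (L phi kf ks hv cpf mc Ac Rg muf KD KF pHG Tb qHG : R)
  (Tf Ts rho : R -> R)
  (HL : 0 < L) (Hphi : 0 < phi < 1)
  (Hkf : 0 < kf) (Hks : 0 < ks) (Hhv : 0 < hv) (Hcpf : 0 < cpf)
  (Hmc : 0 < mc) (HAc : 0 < Ac) (HRg : 0 < Rg) (Hmuf : 0 < muf)
  (HKD : 0 < KD) (HKF : 0 < KF) (HpHG : 0 < pHG)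
  (HTb : 0 < Tb) (HqHG : 0 < qHG)
  (HT : temp_solution L phi kf ks hv cpf mc Ac Tb qHG Tf Ts)
  (HTuniq : forall Tf' Ts', temp_solution L phi kf ks hv cpf mc Ac Tb qHG Tf' Ts' ->
              forall y, 0 <= y <= L -> Tf' y = Tf y /\ Ts' y = Ts y)
  (Hin : pHG / (Rg * Tf L) > mc / (phi * Ac) * (1 / sqrt (Rg * Tb)))
  (Hrho : density_solution L phi hv cpf mc Ac Rg muf KD KF pHG Tf Ts rho)
  (Hrhouniq : forall rho', density_solution L phi hv cpf mc Ac Rg muf KD KF pHG Tf Ts rho' ->
              forall y, 0 <= y <= L -> rho' y = rho y) :
  let v := fun y => mc / (Ac * rho y) in
  (forall y, 0 <= y <= L -> 0 < v y) /\
  (forall y1 y2, 0 <= y1 <= L -> 0 <= y2 <= L -> y1 < y2 -> v y1 < v y2).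
Proof.
  intro v.
  assert (Hphi0 : 0 < phi) by lra.
  destruct (temp_solution_heating L phi kf ks hv cpf mc Ac Tb qHG Tf Ts
              HL Hphi Hkf Hks Hhv Hcpf Hmc HAc HqHG HT) as [Hheat HTfL].
  assert (HTf : continuous_on 0 L Tf).
  { destruct HT as (dTf & _ & _ & _ & HdTf & _).
    exact (deriv_within_continuous_on 0 L Tf dTf HdTf). }
  assert (Hpos := density_pos L phi hv cpf mc Ac Rg muf KD KF pHG Tb Tf Ts rho
                    HL Hphi0 Hmc HAc HRg HpHG HTb HTf HTfL Hin Hrho).
  assert (Hdec := density_decreasing L phi hv cpf mc Ac Rg muf KD KF pHG Tb Tf Ts rho
                    HL Hphi0 Hhv Hcpf Hmc HAc HRg Hmuf HKD HKF HpHG HTb HTf Hheat HTfL Hin Hrho).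
  split.
  - intros y Hy; unfold v.
    apply Rdiv_lt_0_compat; [exact Hmc | apply Rmult_lt_0_compat; auto].
  - intros y1 y2 Hy1 Hy2 H12; unfold v, Rdiv.
    apply Rmult_lt_compat_l; [exact Hmc|].
    assert (Hv2 : 0 < Ac * rho y2) by (apply Rmult_lt_0_compat; auto).
    assert (Hv1 : 0 < Ac * rho y1) by (apply Rmult_lt_0_compat; auto).
    apply Rinv_lt_contravar; [now apply Rmult_lt_0_compat|].
    apply Rmult_lt_compat_l; [exact HAc | apply Hdec; lra].
Qed.
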